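(* Let $\Gamma_3^*\subseteq\mathbb{R}^7$ be the set of entropy vectors of triples of discrete random variables, and let $\Lambda_3\subseteq\Gamma_3^*$ be the set of quasi-uniform entropy vectors. Let $\mathbf{e}_1=[1,0,0,1,1,0,1]^\intercal$, $\mathbf{e}_2=[0,1,0,1,0,1,1]^\intercal$, $\mathbf{e}_3=[0,0,1,0,1,1,1]^\intercal$, $\mathbf{e}_{123'}=[1,1,1,2,2,2,2]^\intercal$, and let $\Theta=\mathrm{cone}(\mathbf{e}_1,\mathbf{e}_2,\mathbf{e}_3,\mathbf{e}_{123'})=\{\lambda_1\mathbf{e}_1+\lambda_2\mathbf{e}_2+\lambda_3\mathbf{e}_3+\lambda_{123'}\mathbf{e}_{123'}:\lambda_1,\lambda_2,\lambda_3,\lambda_{123'}\ge 0\}$. Let $\Theta^{\mathrm{in}}$ be the set of all vectors $\lambda_1\mathbf{e}_1+\lambda_2\mathbf{e}_2+\lambda_3\mathbf{e}_3+\lambda_{123'}\mathbf{e}_{123'}$ with $\lambda_1,\lambda_2,\lambda_3\ge 0$ and $\lambda_{123'}=\log m$ for some $m\in\mathbb{N}$. Then there exists a quasi-uniform entropy vector $\mathbf{h}\in\Lambda_3$ lying in the relative interior of $\Theta$ (i.e., in $\Theta$ but in no proper face of $\Theta$) such that $\mathbf{h}\notin\Theta^{\mathrm{in}}$.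
   Context: All logarithms are base 2 and entropies are in bits. For a discrete random vector $(X_1,X_2,X_3)$, its entropy vector is $\mathbf{h}=[h_1,h_2,h_3,h_{12},h_{13},h_{23},h_{123}]^\intercal\in\mathbb{R}^7$, where $h_\alpha$ is the Shannon entropy of $(X_i)_{i\in\alpha}$. A discrete random variable $X$ is quasi-uniform if there is a constant $p\in(0,1]$ with $\Pr\{X=x\}\in\{p,0\}$ for all $x$; a random vector $(X_1,X_2,X_3)$ is quasi-uniform if $(X_i)_{i\in\alpha}$ is quasi-uniform for every nonempty $\alpha\subseteq\{1,2,3\}$. A quasi-uniform entropy vector is the entropy vector of a quasi-uniform random vector. $\Theta$ is a face of the polymatroid cone $\Gamma_3$ (the set of $\mathbf{h}$ satisfying the Shannon elemental inequalities). *)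

From HB Require Import structures.
From mathcomp Require Import all_boot all_order all_algebra.
From mathcomp Require Import Rstruct.
From Stdlib Require Import Reals.

Set Implicit Arguments.
Unset Strict Implicit.
Unset Printing Implicit Defensive.

Import Order.TTheory GRing.Theory Num.Theory.
Local Open Scope ring_scope.

Definition log2 (x : R) : R := ln x / ln 2.

(* A discrete random vector is modelled on a finite probability space
   (Omega, P); X i : Omega -> T is the i-th variable (i : 'I_3, common
   finite alphabet T). *)
Definition is_pmf (Omega : finType) (P : Omega -> R) : Prop :=
  (forall w, 0 <= P w) /\ \sum_(w : Omega) P w = 1.

Definition law (Omega V : finType) (P : Omega -> R) (Y : Omega -> V) (v : V) : R :=
  \sum_(w : Omega | Y w == v) P w.

(* Shannon entropy in bits (0 log 0 = 0 since 0 * _ = 0) *)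
Definition entropy (Omega V : finType) (P : Omega -> R) (Y : Omega -> V) : R :=
  - \sum_(v : V) law P Y v * log2 (law P Y v).

Definition quasi_uniform (Omega V : finType) (P : Omega -> R) (Y : Omega -> V) : Prop :=
  exists p : R, 0 < p <= 1 /\ forall v, law P Y v = p \/ law P Y v = 0.

Definition subvec (Omega T : finType) (X : 'I_3 -> Omega -> T) (a : {set 'I_3})
  (w : Omega) : {ffun 'I_3 -> option T} :=
  [ffun i => if i \in a then Some (X i w) else None].

Definition i1 : 'I_3 := @inord 2 0.
Definition i2 : 'I_3 := @inord 2 1.
Definition i3 : 'I_3 := @inord 2 2.

Definition alpha7 (k : 'I_7) : {set 'I_3} :=
  nth set0 [:: [set i1]; [set i2]; [set i3]; [set i1; i2]; [set i1; i3];
               [set i2; i3]; [set i1; i2; i3]] k.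

Definition entvec (Omega T : finType) (P : Omega -> R) (X : 'I_3 -> Omega -> T)
  : 'rV[R]_7 := \row_(k < 7) entropy P (subvec X (alpha7 k)).

Definition quasi_uniform_vec (Omega T : finType) (P : Omega -> R)
  (X : 'I_3 -> Omega -> T) : Prop :=
  forall a : {set 'I_3}, a != set0 -> quasi_uniform P (subvec X a).

Definition Lambda3 (h : 'rV[R]_7) : Prop :=
  exists (Omega T : finType) (P : Omega -> R) (X : 'I_3 -> Omega -> T),
    is_pmf P /\ quasi_uniform_vec P X /\ entvec P X = h.

Definition vec7 (l : seq R) : 'rV[R]_7 := \row_(k < 7) nth 0 l k.

Definition e1 : 'rV[R]_7 := vec7 [:: 1; 0; 0; 1; 1; 0; 1].
Definition e2 : 'rV[R]_7 := vec7 [:: 0; 1; 0; 1; 0; 1; 1].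
Definition e3 : 'rV[R]_7 := vec7 [:: 0; 0; 1; 0; 1; 1; 1].
Definition e123' : 'rV[R]_7 := vec7 [:: 1; 1; 1; 2; 2; 2; 2].

Definition comb (l1 l2 l3 l4 : R) : 'rV[R]_7 :=
  l1 *: e1 + l2 *: e2 + l3 *: e3 + l4 *: e123'.

Definition Theta (h : 'rV[R]_7) : Prop :=
  exists l1 l2 l3 l4 : R,
    [/\ 0 <= l1, 0 <= l2, 0 <= l3 & 0 <= l4] /\ h = comb l1 l2 l3 l4.

Definition Theta_in (h : 'rV[R]_7) : Prop :=
  exists (l1 l2 l3 : R) (m : nat),
    [/\ 0 <= l1, 0 <= l2, 0 <= l3 & (1 <= m)%nat] /\ h = comb l1 l2 l3 (log2 m%:R).

Definition is_face (C F : 'rV[R]_7 -> Prop) : Prop :=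
  [/\ (forall x, F x -> C x),
      (forall x y t, F x -> F y -> 0 <= t <= 1 -> F ((1 - t) *: x + t *: y)) &
      (forall x y t, C x -> C y -> 0 < t < 1 -> F ((1 - t) *: x + t *: y) ->
                     F x /\ F y)].

Definition in_relint (C : 'rV[R]_7 -> Prop) (h : 'rV[R]_7) : Prop :=
  C h /\ forall F, is_face C F -> F h -> forall x, F x <-> C x.

(* Let X1, X2 be uniform on Z/3 and X3 = X1 + X2 + 1 + J with J uniform on
   {0, 1}, all independent: (X1, X2, X3) is uniform on the 18 triples with
   X3 <> X1 + X2.  Fixing any one, two or all three coordinates leaves 6, 2 or 1
   of these triples, so every sub-vector is quasi-uniform and the entropy vector
   is (log 3, log 3, log 3, log 9, log 9, log 9, log 18)
   = e1 + e2 + e3 + (log 3 - 1) e123'.  All four coefficients are positive, so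
   the point lies in the relative interior of Theta.  But h1 + h2 + h3 - h123
   recovers the e123' coefficient of any point of Theta, and log 3 - 1 = log m
   would force 2m = 3. *)

From HB Require Import structures.
From mathcomp Require Import all_boot all_order all_algebra.
From mathcomp Require Import Rstruct.
From Stdlib Require Import Reals.
From mathcomp Require Import zify ring lra.

Set Implicit Arguments.
Unset Strict Implicit.
Unset Printing Implicit Defensive.

Import Order.TTheory GRing.Theory Num.Theory.
Local Open Scope ring_scope.

(* Real arguments default to Stdlib's R_scope, whose [*], [/] and numerals are
   not MathComp's; parse them in ring_scope instead. *)
#[local] Arguments log2 x%_ring_scope.
#[local] Arguments comb (l1 l2 l3 l4)%_ring_scope.

Lemma ln2_gt0 : 0 < ln 2.
Proof.
have /RltP lt12 : 1 < 2 :> R by lra.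
by have := ln_increasing _ _ Rlt_0_1 lt12; rewrite ln_1 => /RltP.
Qed.

Lemma log2M x y : 0 < x -> 0 < y -> log2 (x * y) = log2 x + log2 y.
Proof.
by move=> /RltP x_gt0 /RltP y_gt0; rewrite /log2 !RdivE ln_mult // RplusE -mulrDl.
Qed.

Lemma log2V x : 0 < x -> log2 x^-1 = - log2 x.
Proof. by move=> /RltP x_gt0; rewrite /log2 !RdivE -RinvE ln_Rinv // RoppE mulNr. Qed.

Lemma log2_natM m n : (0 < m)%nat -> (0 < n)%nat ->
  log2 (m * n)%:R = log2 m%:R + log2 n%:R.
Proof. by move=> m_gt0 n_gt0; rewrite natrM log2M ?ltr0n. Qed.

Lemma log2_1 : log2 1 = 0.
Proof. by rewrite /log2 ln_1 RdivE mul0r. Qed.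

Lemma log2_2 : log2 2 = 1.
Proof. by rewrite /log2 RdivE divff // gt_eqF // ln2_gt0. Qed.

Lemma log2_lt x y : 0 < x -> x < y -> log2 x < log2 y.
Proof.
move=> /RltP x_gt0 /RltP lt_xy; rewrite /log2 !RdivE ltr_pM2r ?invr_gt0 ?ln2_gt0 //.
exact/RltP/ln_increasing.
Qed.

Lemma log2_inj x y : 0 < x -> 0 < y -> log2 x = log2 y -> x = y.
Proof.
move=> /RltP x_gt0 /RltP y_gt0; rewrite /log2 !RdivE => /mulIf eq_ln; apply: ln_inv => //.
by apply: eq_ln; rewrite invr_eq0 gt_eqF // ln2_gt0.
Qed.

Section Entropy.
Variables (Omega V : finType) (P : Omega -> R) (Y : Omega -> V).

Lemma sum_law : \sum_(v : V) law P Y v = \sum_(w : Omega) P w.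
Proof. by rewrite (partition_big Y xpredT). Qed.

Lemma entropy_quasi_uniform p : is_pmf P ->
  (forall v, law P Y v = p \/ law P Y v = 0) -> entropy P Y = - log2 p.
Proof.
move=> [_ P_sum1] lawY; rewrite /entropy; congr (- _).
transitivity (\sum_(v : V) law P Y v * log2 p).
  by apply: eq_bigr => v _; case: (lawY v) => ->; rewrite ?mul0r.
by rewrite -mulr_suml sum_law P_sum1 mul1r.
Qed.

End Entropy.

Definition uniform_pmf (Omega : finType) (w : Omega) : R := #|Omega|%:R^-1.

Lemma is_pmf_uniform (Omega : finType) : (0 < #|Omega|)%nat -> is_pmf (@uniform_pmf Omega).
Proof.
move=> Omega_gt0; split=> [w|]; first by rewrite /uniform_pmf invr_ge0 ler0n.
by rewrite sumr_const -(mulr_natl (#|Omega|%:R^-1)) mulfV // pnatr_eq0 -lt0n.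
Qed.

Section RegularFibres.
Variables (Omega V : finType) (Y : Omega -> V).

Lemma law_uniform v :
  law (@uniform_pmf Omega) Y v = #|[set w | Y w == v]|%:R / #|Omega|%:R.
Proof.
rewrite /law (eq_bigl (fun w => w \in [set w | Y w == v])) => [|w]; last by rewrite inE.
by rewrite sumr_const mulr_natl.
Qed.

Variable k : nat.
Hypothesis k_range : (0 < k <= #|Omega|)%nat.
Hypothesis card_fibre : forall w0, #|[set w | Y w == Y w0]| = k.

Lemma law_uniform_regular v :
  law (@uniform_pmf Omega) Y v = k%:R / #|Omega|%:R \/ law (@uniform_pmf Omega) Y v = 0.
Proof.
rewrite law_uniform; have [w0 /eqP <- | no_w] := pickP (fun w => Y w == v).
  by left; rewrite card_fibre.
by right; rewrite (eq_card0 (A := [set w | Y w == v])) ?mul0r // => w; rewrite inE no_w.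
Qed.

Lemma quasi_uniform_regular : quasi_uniform (@uniform_pmf Omega) Y.
Proof.
exists (k%:R / #|Omega|%:R); split; last exact: law_uniform_regular.
case/andP: k_range => k_gt0 k_le.
rewrite divr_gt0 ?ltr0n ?(leq_trans k_gt0) //= ler_pdivrMr ?mul1r ?ler_nat //.
by rewrite ltr0n (leq_trans k_gt0).
Qed.

Lemma entropy_regular : entropy (@uniform_pmf Omega) Y = log2 #|Omega|%:R - log2 k%:R.
Proof.
case/andP: k_range => k_gt0 k_le; have N_gt0 := leq_trans k_gt0 k_le.
rewrite (entropy_quasi_uniform _ law_uniform_regular); last exact: is_pmf_uniform.
by rewrite log2M ?log2V ?invr_gt0 ?ltr0n // opprD opprK addrC.
Qed.

End RegularFibres.

Lemma in_relint_extendable (C : 'rV[R]_7 -> Prop) (h : 'rV[R]_7) : C h ->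
  (forall x, C x -> exists y t, [/\ C y, 0 < t < 1 & h = (1 - t) *: x + t *: y]) ->
  in_relint C h.
Proof.
move=> Ch extend; split=> // F [FC _ Fface] Fh x; split=> [/FC // | Cx].
have [y [t [Cy t01 h_eq]]] := extend x Cx; rewrite h_eq in Fh.
by case: (Fface x y t Cx Cy t01 Fh).
Qed.

Lemma comb_convex t a1 a2 a3 a4 b1 b2 b3 b4 :
  (1 - t) *: comb a1 a2 a3 a4 + t *: comb b1 b2 b3 b4 =
  comb ((1 - t) * a1 + t * b1) ((1 - t) * a2 + t * b2)
       ((1 - t) * a3 + t * b3) ((1 - t) * a4 + t * b4).
Proof.
apply/rowP => -[[|[|[|[|[|[|[|//]]]]]]] ?]; rewrite /comb !mxE /=; ring.
Qed.

Lemma comb_relint l1 l2 l3 l4 : 0 < l1 -> 0 < l2 -> 0 < l3 -> 0 < l4 ->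
  in_relint Theta (comb l1 l2 l3 l4).
Proof.
move=> l1_gt0 l2_gt0 l3_gt0 l4_gt0.
apply: in_relint_extendable; first by exists l1, l2, l3, l4; split=> //; split; exact: ltW.
move=> _ [a1 [a2 [a3 [a4 [[a1_ge0 a2_ge0 a3_ge0 a4_ge0] ->]]]]].
have ratio_ge0 (a l : R) : 0 < l -> 0 <= a -> 0 <= a / l.
  by move=> l_gt0 a_ge0; rewrite divr_ge0 // ltW.
have r1_ge0 := ratio_ge0 _ _ l1_gt0 a1_ge0; have r2_ge0 := ratio_ge0 _ _ l2_gt0 a2_ge0.
have r3_ge0 := ratio_ge0 _ _ l3_gt0 a3_ge0; have r4_ge0 := ratio_ge0 _ _ l4_gt0 a4_ge0.
(* D dominates 2 and every a_i / l_i, so s := D^-1 lies in (0, 1) and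
   s * a_i <= l_i: comb l = s * comb a + (1 - s) * y with y in Theta. *)
pose D := 2 + a1 / l1 + a2 / l2 + a3 / l3 + a4 / l4.
have D_ge2 : 2 <= D by rewrite /D; lra.
have weight_le (a l : R) : 0 < l -> a / l <= D -> D^-1 * a <= l.
  by move=> l_gt0; rewrite ler_pdivrMr // ler_pdivrMl //; lra.
pose s := D^-1; pose t := 1 - s.
have s_gt0 : 0 < s by rewrite invr_gt0; lra.
have s_lt1 : s < 1 by rewrite invf_lt1; lra.
have t_neq0 : t != 0 by rewrite subr_eq0 eq_sym lt_eqF.
have y_coef_ge0 (a l : R) : 0 < l -> a / l <= D -> 0 <= (l - s * a) / t.
  by move=> l_gt0 /(weight_le _ _ l_gt0) le_sa; rewrite divr_ge0 ?subr_ge0 // ltW.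
exists (comb ((l1 - s * a1) / t) ((l2 - s * a2) / t)
             ((l3 - s * a3) / t) ((l4 - s * a4) / t)), t.
split.
- exists ((l1 - s * a1) / t), ((l2 - s * a2) / t), ((l3 - s * a3) / t), ((l4 - s * a4) / t).
  by split=> //; split; apply: y_coef_ge0 => //; rewrite /D; lra.
- by rewrite /t subr_gt0 s_lt1 ltrBlDr ltrDl s_gt0.
- by rewrite comb_convex /t; congr comb; field.
Qed.

Lemma comb_coef4_inj l1 l2 l3 l4 m1 m2 m3 m4 :
  comb l1 l2 l3 l4 = comb m1 m2 m3 m4 -> l4 = m4.
Proof.
move/rowP=> eq_lm; have coord k := eq_lm (@inord 6 k).
have := coord 0%nat; have := coord 1%nat; have := coord 2%nat; have := coord 6%nat.
by rewrite /comb !mxE !inordK //=; lra.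
Qed.

Lemma i1E : i1 = ord0. Proof. exact/val_inj/inordK. Qed.
Lemma i2E : i2 = lift ord0 ord0. Proof. exact/val_inj/inordK. Qed.
Lemma i3E : i3 = lift ord0 (lift ord0 ord0). Proof. exact/val_inj/inordK. Qed.

Lemma ord3_cases (i : 'I_3) : [\/ i = i1, i = i2 | i = i3].
Proof.
rewrite i1E i2E i3E.
by case: i => -[|[|[|//]]] ?; [apply: Or31 | apply: Or32 | apply: Or33]; apply: val_inj.
Qed.

Lemma card_set3 (a : {set 'I_3}) : #|a| = ((i1 \in a) + (i2 \in a) + (i3 \in a))%nat.
Proof.
by rewrite -sum1_card big_mkcond !big_ord_recl big_ord0 i1E i2E i3E /= addn0 addnA.
Qed.

Lemma eq_subvec (Omega T : finType) (X : 'I_3 -> Omega -> T) a w w' :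
  (subvec X a w == subvec X a w') =
  [&& (i1 \in a) ==> (X i1 w == X i1 w'), (i2 \in a) ==> (X i2 w == X i2 w')
    & (i3 \in a) ==> (X i3 w == X i3 w')].
Proof.
apply/eqP/and3P => [/ffunP eq_a | eq_123].
  have eq_i i : (i \in a) ==> (X i w == X i w').
    by have := eq_a i; rewrite !ffunE; case: (i \in a) => //= -[->].
  by split; apply: eq_i.
have eq_i i : (i \in a) ==> (X i w == X i w').
  by case: eq_123; case: (ord3_cases i) => ->.
by apply/ffunP => i; rewrite !ffunE; case: (i \in a) (eq_i i) => // /eqP ->.
Qed.

Definition Omega : finType := ('I_3 * 'I_3 * 'I_2)%type.

Definition X (i : 'I_3) (w : Omega) : 'I_3 :=
  let: (x, y, j) := w in nth x [:: x; y; inZp (x + y + 1 + j)] i.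

Definition fibre_size (n : nat) : nat := nth 0 [:: 18; 6; 2; 1] n.

Lemma card_Omega : #|Omega| = 18%nat.
Proof. by rewrite !card_prod !card_ord. Qed.

Lemma sum_Omega (F : Omega -> nat) :
  (\sum_(w : Omega) F w = \sum_(x < 3) \sum_(y < 3) \sum_(j < 2) F (x, y, j))%nat.
Proof. by rewrite pair_big pair_big; apply: eq_bigr => -[[x y] j]. Qed.

Lemma card_fibre_X (a : {set 'I_3}) (w0 : Omega) : a != set0 ->
  #|[set w | subvec X a w == subvec X a w0]| = fibre_size #|a|.
Proof.
rewrite -card_gt0 -sum1dep_card card_set3 big_mkcond /=.
under eq_bigr => w _ do rewrite eq_subvec.
case: w0 => [[x0 y0] j0]; rewrite sum_Omega !big_ord_recl !big_ord0 i1E i2E i3E.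
case: (ord0 \in a); case: (lift ord0 ord0 \in a);
  case: (lift ord0 (lift ord0 ord0) \in a) => //= _;
  by case: x0 => -[|[|[|//]]] ?; case: y0 => -[|[|[|//]]] ?; case: j0 => -[|[|//]] ?.
Qed.

Lemma fibre_size_range (a : {set 'I_3}) : a != set0 ->
  (0 < fibre_size #|a| <= #|Omega|)%nat.
Proof.
rewrite card_Omega -card_gt0; have := max_card a; rewrite card_ord.
by case: #|a| => [|[|[|[|]]]].
Qed.

Lemma quasi_uniform_vec_X : quasi_uniform_vec (@uniform_pmf Omega) X.
Proof.
move=> a a_neq0; apply: (quasi_uniform_regular (fibre_size_range a_neq0)) => w0.
exact: card_fibre_X.
Qed.

Lemma entropy_X (a : {set 'I_3}) : a != set0 ->
  entropy (@uniform_pmf Omega) (subvec X a) = log2 18%:R - log2 (fibre_size #|a|)%:R.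
Proof.
move=> a_neq0; rewrite -card_Omega.
apply: (entropy_regular (fibre_size_range a_neq0)) => w0.
exact: card_fibre_X.
Qed.

Lemma card_alpha7 (k : 'I_7) : #|alpha7 k| = nth 0 [:: 1; 1; 1; 2; 2; 2; 3]%nat k.
Proof.
by case: k => -[|[|[|[|[|[|[|//]]]]]]] ?; rewrite card_set3 /alpha7 /= !inE i1E i2E i3E.
Qed.

Definition hX : 'rV[R]_7 := comb 1 1 1 (log2 3%:R - 1).

Lemma entvec_X : entvec (@uniform_pmf Omega) X = hX.
Proof.
have log2_6 : log2 6%:R = 1 + log2 3%:R.
  by rewrite (_ : 6 = 2 * 3)%nat // log2_natM // log2_2.
have log2_18 : log2 18%:R = 1 + 2 * log2 3%:R.
  by rewrite (_ : 18 = 2 * (3 * 3))%nat // !log2_natM // log2_2 mulr2n mulrDl mul1r addrA.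
apply/rowP => k; have alpha7_neq0 : alpha7 k != set0.
  by rewrite -card_gt0 card_alpha7; case: k => -[|[|[|[|[|[|[|//]]]]]]].
rewrite mxE (entropy_X alpha7_neq0) card_alpha7 /hX /comb !mxE.
by case: k {alpha7_neq0} => -[|[|[|[|[|[|[|//]]]]]]] ?;
  rewrite /fibre_size /= ?mulr1n ?log2_1 ?log2_2 ?log2_6 log2_18; lra.
Qed.

Lemma Lambda3_hX : Lambda3 hX.
Proof.
exists Omega, ('I_3 : finType), (@uniform_pmf Omega), X; split.
  by apply: is_pmf_uniform; rewrite card_Omega.
by split; [exact: quasi_uniform_vec_X | exact: entvec_X].
Qed.

Lemma log2_3_gt1 : 1 < log2 3%:R.
Proof. by rewrite -[X in X < _]log2_2 log2_lt ?ltr0n ?ltr_nat. Qed.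

Lemma not_Theta_in_hX : ~ Theta_in hX.
Proof.
case=> l1 [l2 [l3 [m [[_ _ _ m_gt0] /comb_coef4_inj log2m]]]].
have : (2 * m)%:R = 3%:R :> R.
  by apply: log2_inj; rewrite ?ltr0n ?muln_gt0 // log2_natM // log2_2 -log2m; lra.
by move/eqP; rewrite eqr_nat => /eqP; lia.
Qed.

Theorem theorem4 :
  exists h : 'rV[R]_7, Lambda3 h /\ in_relint Theta h /\ ~ Theta_in h.
Proof.
exists hX; split; first exact: Lambda3_hX.
split; last exact: not_Theta_in_hX.
by apply: comb_relint; rewrite ?ltr01 // subr_gt0 log2_3_gt1.
Qed.
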